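(* Let $\mathcal{T}^*$ be the category of rooted simplicial trees and rooted metrically proper homotopy classes of rooted continuous metrically proper maps. The assignment $\eta$ given by $\eta(T,v)=(C_n,p_n)_{n\ge1}$, where $C_n$ is the set of vertices at distance $n$ from $v$ and $p_n:C_{n+1}\to C_n$ sends a vertex to its unique adjacent vertex at distance $n$ from $v$, and, for a rooted continuous metrically proper map $f:(T,v)\to(T',w)$, $\eta(f)=$ the class in \textbf{Tower-Set} of $(f_n,\Phi_f)$, where $(t_n)$ is a strictly increasing sequence of integers with $f^{-1}(B(w,n))\subset B(v,t_n)$, $\Phi_f(n)=t_n$, and $f_n(c)$ for $c\in C_{t_n}$ is the unique vertex $c'$ of $T'$ at distance $n$ from $w$ with $f(T_c)\subset T'_{c'}$, is a well-defined functor $\mathcal{T}^*\to\textbf{Tower-Set}$.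
   Context: A rooted simplicial tree $(T,v)$ is the geometric realization of a simplicial tree, each edge of length 1, with the path metric and a distinguished root vertex $v$. $B(x,r)$ is the open ball. For $c\in T$, $T_c=\{x\in T: c\in[v,x]\}$, $[v,x]$ the unique arc. Metrically proper: preimages of bounded sets are bounded; rooted: root to root. A rooted metrically proper homotopy between rooted continuous metrically proper maps $f,f':(T,v)\to(T',w)$ is a continuous $H:T\times[0,1]\to T'$ with $H(\cdot,0)=f$, $H(\cdot,1)=f'$, $H(v,s)=w$, and such that for all $M>0$ there is $N>0$ with $H^{-1}(B(w,M))\subset B(v,N)\times[0,1]$. \textbf{Tower-Set}: objects are inverse sequences $(X_n,p_n)_{n\ge1}$ of sets, $p_n:X_{n+1}\to X_n$, $p_{nm}=p_n\circ\cdots\circ p_{m-1}$; a morphism $(f_n,\Phi)$ consists of $\Phi:\mathbb{N}\to\mathbb{N}$ and maps $f_n:X_{\Phi(n)}\to Y_n$ such that for all $n'>n$ there is $m\ge\Phi(n),\Phi(n')$ with $f_n\circ p_{\Phi(n)m}=q_{nn'}\circ f_{n'}\circ p_{\Phi(n')m}$; morphisms $(f_n,\Phi),(g_n,\Psi)$ are identified if each $n$ admits $m\ge\Phi(n),\Psi(n)$ with $f_n\circ p_{\Phi(n)m}=g_n\circ p_{\Psi(n)m}$; composition is $(g_n\circ f_{\Psi(n)},\Phi\circ\Psi)$. *)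

From Stdlib Require Import Reals Lra Arith ClassicalEpsilon.
Open Scope R_scope.

(* A rooted simplicial tree is encoded by its vertex type V, its root,  *)
(* and the "parent" map (the unique neighbour closer to the root); the  *)
(* edges are {x, par x} for x <> root.  Every vertex reaches the root   *)
(* by iterating par (connectedness; acyclicity is automatic).           *)
(* Convention: par root = root.                                         *)
Record tree : Type := Tree {
  V : Type;
  root : V;
  par : V -> V;
  par_root : par root = root;
  reach : forall x : V, exists k : nat, Nat.iter k par x = root }.

Arguments root {t}.
Arguments par {t} _.

Definition depth (T : tree) (x : V T) : nat :=
  epsilon (inhabits 0%nat)
    (fun k => Nat.iter k par x = root /\
              forall j, Nat.iter j par x = root -> (k <= j)%nat).

Definition anc (T : tree) (z x : V T) : Prop :=
  exists k : nat, Nat.iter k par x = z.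

(* Geometric realization.  A point is a pair (x, t) with 0 < t <= 1:   *)
(* the point of the edge [par x, x] at distance t from par x (t = 1 is  *)
(* the vertex x itself); the root is (root, 1).                         *)
Record point (T : tree) : Type := Point {
  pv : V T;
  pt : R;
  pt_pos : 0 < pt;
  pt_le1 : pt <= 1;
  pt_root : pv = root -> pt = 1 }.

Arguments pv {T} _.
Arguments pt {T} _.

Definition vpt {T : tree} (x : V T) : point T :=
  Point T x 1 Rlt_0_1 (Rle_refl 1) (fun _ => eq_refl).

Definition droot (T : tree) : point T := vpt (@root T).

Definition height {T : tree} (a : point T) : R :=
  INR (depth T (pv a)) + pt a - 1.

(* a lies on the arc [root, b] *)
Definition ple {T : tree} (a b : point T) : Prop :=
  (pv a = pv b /\ pt a <= pt b) \/ (pv a <> pv b /\ anc T (pv a) (pv b)).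

Definition meet_height {T : tree} (a b : point T) : R :=
  epsilon (inhabits 0)
    (fun r => exists c, ple c a /\ ple c b /\ height c = r /\
              forall c', ple c' a -> ple c' b -> height c' <= r).

(* path metric of the realization (edges of length 1) *)
Definition dist {T : tree} (a b : point T) : R :=
  height a + height b - 2 * meet_height a b.

Definition ball {T : tree} (x : point T) (r : R) : point T -> Prop :=
  fun y => dist x y < r.

Definition subtree {T : tree} (c : V T) : point T -> Prop :=
  fun x => ple (vpt c) x.

Definition rooted {T T' : tree} (f : point T -> point T') : Prop :=
  f (droot T) = droot T'.

Definition cont_map {T T' : tree} (f : point T -> point T') : Prop :=
  forall a eps, 0 < eps -> exists del, 0 < del /\
    forall b, dist a b < del -> dist (f a) (f b) < eps.

Definition mproper {T T' : tree} (f : point T -> point T') : Prop :=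
  forall M, 0 < M -> exists N, 0 < N /\
    forall a, ball (droot T') M (f a) -> ball (droot T) N a.

Definition rcp {T T' : tree} (f : point T -> point T') : Prop :=
  rooted f /\ cont_map f /\ mproper f.

(* rooted metrically proper homotopy; continuity on T x [0,1] with the
   product (max) metric *)
Definition rp_homotopy {T T' : tree} (f f' : point T -> point T')
    (H : point T -> R -> point T') : Prop :=
  (forall a s eps, 0 <= s <= 1 -> 0 < eps -> exists del, 0 < del /\
     forall b s', 0 <= s' <= 1 -> dist a b < del -> Rabs (s - s') < del ->
       dist (H a s) (H b s') < eps) /\
  (forall a, H a 0 = f a) /\
  (forall a, H a 1 = f' a) /\
  (forall s, 0 <= s <= 1 -> H (droot T) s = droot T') /\
  (forall M, 0 < M -> exists N, 0 < N /\
     forall a s, 0 <= s <= 1 -> ball (droot T') M (H a s) -> ball (droot T) N a).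

Definition rp_homotopic {T T' : tree} (f f' : point T -> point T') : Prop :=
  exists H, rp_homotopy f f' H.

(* Tower-Set.  An inverse sequence of sets (X_n, p_n)_{n>=1} is encoded *)
(* by an ambient type TX, membership predicates Tmem n (X_n), and maps  *)
(* Tp n (p_n : X_{n+1} -> X_n, only its values on X_{n+1} matter).      *)
(* Level 0 is ignored.                                                  *)
Record tower : Type := Tower {
  TX : Type;
  Tmem : nat -> TX -> Prop;
  Tp : nat -> TX -> TX }.

Definition is_tower (X : tower) : Prop :=
  forall n x, (1 <= n)%nat -> Tmem X (S n) x -> Tmem X n (Tp X n x).

Fixpoint pd {A : Type} (p : nat -> A -> A) (n k : nat) (x : A) : A :=
  match k with
  | O => x
  | S k' => pd p n k' (p (n + k')%nat x)
  end.

Definition pnm (X : tower) (n m : nat) : TX X -> TX X :=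
  pd (Tp X) n (m - n).

Record tmor (X Y : tower) : Type := TMor {
  tPhi : nat -> nat;
  tf : nat -> TX X -> TX Y }.

Arguments tPhi {X Y} _ _.
Arguments tf {X Y} _ _ _.

Definition is_tmor {X Y : tower} (F : tmor X Y) : Prop :=
  (forall n, (1 <= n)%nat -> (1 <= tPhi F n)%nat) /\
  (forall n x, (1 <= n)%nat -> Tmem X (tPhi F n) x -> Tmem Y n (tf F n x)) /\
  (forall n n', (1 <= n)%nat -> (n < n')%nat ->
     exists m, (tPhi F n <= m)%nat /\ (tPhi F n' <= m)%nat /\
       forall x, Tmem X m x ->
         tf F n (pnm X (tPhi F n) m x) =
         pnm Y n n' (tf F n' (pnm X (tPhi F n') m x))).

Definition tmor_eq {X Y : tower} (F G : tmor X Y) : Prop :=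
  forall n, (1 <= n)%nat ->
    exists m, (tPhi F n <= m)%nat /\ (tPhi G n <= m)%nat /\
      forall x, Tmem X m x ->
        tf F n (pnm X (tPhi F n) m x) = tf G n (pnm X (tPhi G n) m x).

Definition tmor_id (X : tower) : tmor X X := TMor X X (fun n => n) (fun _ x => x).

Definition tmor_comp {X Y Z : tower} (F : tmor X Y) (G : tmor Y Z) : tmor X Z :=
  TMor X Z (fun n => tPhi F (tPhi G n)) (fun n x => tf G n (tf F (tPhi G n) x)).

Definition eta_obj (T : tree) : tower :=
  Tower (V T) (fun n x => depth T x = n) (fun _ x => par x).

Definition eta_seq {T T' : tree} (f : point T -> point T') (Phi : nat -> nat) : Prop :=
  (forall n, (1 <= n)%nat -> (Phi n < Phi (S n))%nat) /\
  (forall n a, (1 <= n)%nat ->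
     ball (droot T') (INR n) (f a) -> ball (droot T) (INR (Phi n)) a).

Definition eta_data {T T' : tree} (f : point T -> point T')
    (F : tmor (eta_obj T) (eta_obj T')) : Prop :=
  eta_seq f (tPhi F) /\
  (forall n (c : V T), (1 <= n)%nat -> depth T c = tPhi F n ->
     depth T' (tf F n c) = n /\
     forall a, subtree c a -> subtree (tf F n c) (f a)).

(* Two points lying in subtrees T_c and T_c' with c <> c' of the same depth n
   are at distance at least 2, since the arc joining them passes below depth n.
   Hence a continuous path that stays at height >= n cannot leave the subtree
   T_c it starts in (connectedness of [0,1]).  Applied along the edges of T_c,
   where a rooted continuous proper f with f^{-1}(B(w,n)) inside B(v,t_n) keeps
   height >= n, this shows that f maps T_c into a single T'_c'; applied to the
   track s |-> H(x,s) of a deep vertex under a proper homotopy, it shows that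
   homotopic maps induce the same f_n.  All remaining conditions (tower maps,
   morphism compatibility, identity, composition) reduce to the fact that two
   ancestors of the same vertex with equal depth coincide. *)
From Stdlib Require Import Reals Lra Lia Arith Classical ClassicalEpsilon
  ProofIrrelevance FunctionalExtensionality PropExtensionality.
Open Scope R_scope.

Lemma ex_least_nat (P : nat -> Prop) :
  (exists k, P k) -> exists k, P k /\ forall j, P j -> (k <= j)%nat.
Proof.
  intros [k Hk]. induction k as [k IH] using (well_founded_induction lt_wf).
  destruct (classic (exists j, (j < k)%nat /\ P j)) as [[j [Hjk Hj]] | Hnone].
  - exact (IH j Hjk Hj).
  - exists k. split; [exact Hk |]. intros j Hj.
    destruct (le_lt_dec k j); [assumption | exfalso; eauto].
Qed.

Lemma depth_spec (T : tree) (x : V T) :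
  Nat.iter (depth T x) par x = root /\
  forall j, Nat.iter j par x = root -> (depth T x <= j)%nat.
Proof. unfold depth. apply epsilon_spec, ex_least_nat, reach. Qed.

Lemma iter_par_root (T : tree) k : Nat.iter k (@par T) root = root.
Proof. induction k as [|k IH]; simpl; [reflexivity |]. rewrite IH. apply par_root. Qed.

Lemma depth_root (T : tree) : depth T root = 0%nat.
Proof. pose proof (proj2 (depth_spec T root) 0%nat eq_refl). lia. Qed.

Lemma depth_eq0 (T : tree) (x : V T) : depth T x = 0%nat -> x = root.
Proof. intros H. pose proof (proj1 (depth_spec T x)) as Hx. rewrite H in Hx. exact Hx. Qed.

Lemma depth_par (T : tree) (x : V T) : depth T (par x) = (depth T x - 1)%nat.
Proof.
  destruct (depth_spec T x) as [Hx Hxmin], (depth_spec T (par x)) as [Hp Hpmin].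
  destruct (depth T x) as [|d] eqn:Hd.
  - simpl in Hx. subst x. rewrite par_root, depth_root. reflexivity.
  - assert (depth T (par x) <= d)%nat by (apply Hpmin; rewrite <- Nat.iter_succ_r; exact Hx).
    assert (S d <= S (depth T (par x)))%nat by (apply Hxmin; rewrite Nat.iter_succ_r; exact Hp).
    lia.
Qed.

Lemma depth_iter (T : tree) k (x : V T) :
  depth T (Nat.iter k par x) = (depth T x - k)%nat.
Proof. induction k as [|k IH]; simpl; [lia |]. rewrite depth_par, IH. lia. Qed.

Lemma depth_pos (T : tree) (u : V T) : u <> root -> (1 <= depth T u)%nat.
Proof. intros Hu. destruct (depth T u) eqn:Hd; [apply depth_eq0 in Hd; congruence | lia]. Qed.

Lemma par_fixed (T : tree) (x : V T) : par x = x -> x = root.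
Proof.
  intros Hx. destruct (reach T x) as [k Hk]. rewrite <- Hk.
  clear Hk. induction k as [|k IH]; simpl; congruence.
Qed.

Lemma anc_iter (T : tree) k (x : V T) : anc T (Nat.iter k par x) x.
Proof. exists k. reflexivity. Qed.

Lemma anc_root (T : tree) (x : V T) : anc T root x.
Proof. apply reach. Qed.

Lemma anc_trans (T : tree) (u v x : V T) : anc T u v -> anc T v x -> anc T u x.
Proof. intros [i Hi] [j Hj]. exists (i + j)%nat. rewrite Nat.iter_add. congruence. Qed.

Lemma anc_depth (T : tree) (u x : V T) : anc T u x -> (depth T u <= depth T x)%nat.
Proof. intros [i <-]. rewrite depth_iter. lia. Qed.

Lemma anc_depth_lt (T : tree) (u x : V T) : anc T u x -> u <> x -> (depth T u < depth T x)%nat.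
Proof.
  intros [[|i] <-] Hne; simpl in Hne; [congruence |].
  rewrite depth_iter. destruct (depth T x) eqn:Hd; [| lia].
  apply depth_eq0 in Hd. subst x. rewrite iter_par_root, par_root in Hne. congruence.
Qed.

Lemma anc_par (T : tree) (c u : V T) : anc T c u -> u <> c -> anc T c (par u).
Proof.
  intros [[|k] Hk] Hne; simpl in Hk; [congruence |].
  exists k. rewrite <- Nat.iter_succ_r. exact Hk.
Qed.

Lemma anc_depth_inj (T : tree) (u v x : V T) :
  anc T u x -> anc T v x -> depth T u = depth T v -> u = v.
Proof.
  intros [i <-] [j <-] Huv. rewrite !depth_iter in Huv.
  destruct (Nat.eq_dec (depth T x - i) 0) as [Hz | Hz].
  - rewrite (depth_eq0 T (Nat.iter i par x)), (depth_eq0 T (Nat.iter j par x));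
      rewrite ?depth_iter; auto; lia.
  - replace j with i by lia. reflexivity.
Qed.

Lemma anc_comparable (T : tree) (u v x : V T) :
  anc T u x -> anc T v x -> (depth T u <= depth T v)%nat -> anc T u v.
Proof.
  intros [i <-] [j <-] Huv. rewrite !depth_iter in Huv.
  destruct (le_lt_dec j i).
  - exists (i - j)%nat. rewrite <- Nat.iter_add. f_equal. lia.
  - exists 0%nat. simpl.
    rewrite (depth_eq0 T (Nat.iter i par x)), (depth_eq0 T (Nat.iter j par x));
      rewrite ?depth_iter; auto; lia.
Qed.

Lemma deepest_common_anc (T : tree) (x y : V T) :
  exists w, anc T w x /\ anc T w y /\
    forall u, anc T u x -> anc T u y -> (depth T u <= depth T w)%nat.
Proof.
  destruct (ex_least_nat (fun k => anc T (Nat.iter k par x) y)) as [k [Hk Hkmin]].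
  { exists (depth T x). rewrite (proj1 (depth_spec T x)). apply anc_root. }
  exists (Nat.iter k par x). split; [apply anc_iter | split; [exact Hk |]].
  intros u [j <-] Hu. specialize (Hkmin j Hu). rewrite !depth_iter. lia.
Qed.

Lemma point_eq (T : tree) (a b : point T) : pv a = pv b -> pt a = pt b -> a = b.
Proof. destruct a, b; simpl. intros -> ->. f_equal; apply proof_irrelevance. Qed.

Lemma height_vpt (T : tree) (x : V T) : height (vpt x) = INR (depth T x).
Proof. unfold height, vpt; simpl. ring. Qed.

Lemma height_ge0 (T : tree) (a : point T) : 0 <= height a.
Proof.
  unfold height. pose proof (pt_pos _ a).
  destruct (depth T (pv a)) eqn:Hd.
  - rewrite (pt_root _ a (depth_eq0 T _ Hd)). simpl. lra.
  - rewrite S_INR. pose proof (pos_INR n). lra.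
Qed.

Lemma height_ge_depth_anc (T : tree) (a : point T) k (c : V T) :
  Nat.iter k par (pv a) = c -> (pt a = 1 \/ (1 <= k)%nat) -> INR (depth T c) <= height a.
Proof.
  intros Hk Hpt. pose proof (depth_iter T k (pv a)) as Hd. rewrite Hk in Hd.
  pose proof (height_ge0 T a). pose proof (pt_pos _ a). unfold height in *.
  destruct Hpt as [-> | Hk1].
  - rewrite Hd. assert (INR (depth T (pv a) - k) <= INR (depth T (pv a))) by (apply le_INR; lia).
    lra.
  - destruct (depth T c) eqn:Hc; [simpl; lra |].
    assert (INR (S n) + 1 <= INR (depth T (pv a))) by (rewrite <- S_INR; apply le_INR; lia).
    lra.
Qed.

Lemma ple_refl (T : tree) (a : point T) : ple a a.
Proof. left. split; [reflexivity | lra]. Qed.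

Lemma ple_anc (T : tree) (a b : point T) : ple a b -> anc T (pv a) (pv b).
Proof. intros [[-> _] | [_ H]]; [exists 0%nat; reflexivity | exact H]. Qed.

Lemma ple_height (T : tree) (a b : point T) : ple a b -> height a <= height b.
Proof.
  intros [[Hv Hle] | [Hne Hanc]].
  - unfold height. rewrite Hv. lra.
  - pose proof (anc_depth_lt T _ _ Hanc Hne).
    pose proof (pt_le1 _ a). pose proof (pt_pos _ b).
    assert (INR (depth T (pv a)) + 1 <= INR (depth T (pv b)))
      by (rewrite <- S_INR; apply le_INR; lia).
    unfold height. lra.
Qed.

Lemma ple_root (T : tree) (a : point T) : ple (droot T) a.
Proof.
  destruct (classic (pv a = root)) as [Hr | Hr].
  - left. simpl. split; [auto | rewrite (pt_root _ a Hr); lra].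
  - right. simpl. split; [auto | apply anc_root].
Qed.

Lemma meet_height_eq (T : tree) (a b : point T) (r : R) :
  (exists c, ple c a /\ ple c b /\ height c = r /\
     forall c', ple c' a -> ple c' b -> height c' <= r) ->
  meet_height a b = r.
Proof.
  intros Hr.
  assert (Hm : exists c, ple c a /\ ple c b /\ height c = meet_height a b /\
                 forall c', ple c' a -> ple c' b -> height c' <= meet_height a b)
    by (unfold meet_height; apply epsilon_spec; exists r; exact Hr).
  destruct Hr as [c1 [A1 [B1 [<- M1]]]], Hm as [c2 [A2 [B2 [E2 M2]]]].
  pose proof (M1 _ A2 B2). pose proof (M2 _ A1 B1). lra.
Qed.

Lemma dist_ple (T : tree) (a b : point T) : ple a b -> dist a b = height b - height a.
Proof.
  intros Hab. unfold dist. rewrite (meet_height_eq T a b (height a)); [ring |].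
  exists a. repeat split; [apply ple_refl | exact Hab |].
  intros c' Hc' _. apply ple_height, Hc'.
Qed.

Lemma dist_sym (T : tree) (a b : point T) : dist a b = dist b a.
Proof.
  unfold dist, meet_height.
  replace (fun r => exists c, ple c b /\ ple c a /\ height c = r /\
             forall c', ple c' b -> ple c' a -> height c' <= r)
    with (fun r => exists c, ple c a /\ ple c b /\ height c = r /\
             forall c', ple c' a -> ple c' b -> height c' <= r); [ring |].
  extensionality r. apply propositional_extensionality.
  split; intros [c [H1 [H2 [H3 H4]]]]; exists c; repeat split; auto.
Qed.

Lemma dist_refl (T : tree) (a : point T) : dist a a = 0.
Proof. rewrite dist_ple by apply ple_refl. ring. Qed.

Lemma dist_root (T : tree) (a : point T) : dist (droot T) a = height a.
Proof. rewrite dist_ple by apply ple_root. unfold droot. rewrite height_vpt, depth_root. simpl. ring. Qed.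

Lemma ball_root (T : tree) (r : R) (a : point T) : ball (droot T) r a <-> height a < r.
Proof. unfold ball. rewrite dist_root. reflexivity. Qed.

Lemma dist_same_vertex (T : tree) (a b : point T) : pv a = pv b -> dist a b = Rabs (pt a - pt b).
Proof.
  intros Hv. destruct (Rle_dec (pt a) (pt b)).
  - rewrite dist_ple by (left; auto). unfold height. rewrite Hv, Rabs_left1 by lra. ring.
  - rewrite dist_sym, dist_ple by (left; split; auto; lra).
    unfold height. rewrite Hv, Rabs_right by lra. ring.
Qed.

Lemma dist_par_vertex (T : tree) (u : V T) (a : point T) :
  u <> root -> pv a = u -> dist (vpt (par u)) a = pt a.
Proof.
  intros Hu Hv. rewrite dist_ple.
  - unfold height; simpl. rewrite Hv, depth_par, minus_INR by (apply depth_pos, Hu).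
    simpl. ring.
  - right. simpl. rewrite Hv. split.
    + intros Hp. apply Hu, par_fixed, Hp.
    + exists 1%nat. reflexivity.
Qed.

Lemma subtree_anc (T : tree) (c : V T) (a : point T) : subtree c a -> anc T c (pv a).
Proof. apply ple_anc. Qed.

Lemma subtree_vpt (T : tree) (c x : V T) : anc T c x -> subtree c (vpt x).
Proof.
  intros Hcx. destruct (classic (c = x)) as [<- | Hne]; [apply ple_refl |].
  right. simpl. auto.
Qed.

Lemma subtree_height (T : tree) (c : V T) (a : point T) :
  subtree c a -> INR (depth T c) <= height a.
Proof.
  intros [[Hv Hle] | [Hne [k Hk]]]; simpl in *.
  - apply (height_ge_depth_anc T a 0); [simpl; auto | left; pose proof (pt_le1 _ a); lra].
  - apply (height_ge_depth_anc T a k c Hk). right. destruct k; simpl in Hk; [congruence | lia].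
Qed.

Lemma subtree_cover (T : tree) (n : nat) (a : point T) :
  INR n <= height a -> exists c, depth T c = n /\ subtree c a.
Proof.
  intros Ha. unfold height in Ha. pose proof (pt_le1 _ a). pose proof (pt_pos _ a).
  assert (n <= depth T (pv a))%nat by (apply INR_le; lra).
  destruct (Nat.eq_dec (depth T (pv a)) n) as [Hd | Hd].
  - exists (pv a). split; [exact Hd |]. left. simpl. rewrite Hd in Ha. split; [reflexivity | lra].
  - exists (Nat.iter (depth T (pv a) - n) par (pv a)). rewrite depth_iter. split; [lia |].
    right. simpl. split; [| apply anc_iter].
    intros Heq. apply (f_equal (depth T)) in Heq. rewrite depth_iter in Heq. lia.
Qed.

Lemma subtree_separated (T : tree) (c1 c2 : V T) (a b : point T) :
  depth T c1 = depth T c2 -> c1 <> c2 -> subtree c1 a -> subtree c2 b -> 2 <= dist a b.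
Proof.
  intros Hd Hne Ha Hb.
  pose proof (subtree_height _ _ _ Ha). pose proof (subtree_height _ _ _ Hb).
  apply subtree_anc in Ha, Hb.
  destruct (deepest_common_anc T (pv a) (pv b)) as [w [Hwa [Hwb Hwmax]]].
  assert (Hw : (depth T w < depth T c1)%nat).
  { destruct (le_lt_dec (depth T c1) (depth T w)); [exfalso | assumption].
    apply Hne, (anc_depth_inj T c1 c2 w); auto.
    - apply (anc_comparable T c1 w (pv a)); auto.
    - apply (anc_comparable T c2 w (pv b)); [auto | auto | lia]. }
  unfold dist. rewrite (meet_height_eq T a b (INR (depth T w))).
  - assert (INR (depth T w) + 1 <= INR (depth T c1)) by (rewrite <- S_INR; apply le_INR; lia).
    rewrite Hd in *. lra.
  - exists (vpt w). repeat split.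
    + right. simpl. split; [| exact Hwa].
      intros Heq. rewrite Heq in Hw. pose proof (anc_depth T _ _ Ha). lia.
    + right. simpl. split; [| exact Hwb].
      intros Heq. rewrite Heq, Hd in Hw. pose proof (anc_depth T _ _ Hb). lia.
    + apply height_vpt.
    + intros c' Hc'a Hc'b. apply ple_anc in Hc'a, Hc'b. pose proof (Hwmax _ Hc'a Hc'b).
      pose proof (pt_le1 _ c'). assert (INR (depth T (pv c')) <= INR (depth T w)) by (apply le_INR; auto).
      unfold height. lra.
Qed.

Lemma subtree_near (T : tree) (c : V T) (a b : point T) :
  INR (depth T c) <= height b -> dist a b < 2 -> subtree c a -> subtree c b.
Proof.
  intros Hb Hab Ha. destruct (subtree_cover T _ b Hb) as [c' [Hc' Hbc']].
  destruct (classic (c = c')) as [-> | Hne]; [exact Hbc' |].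
  pose proof (subtree_separated T c c' a b (eq_sym Hc') Hne Ha Hbc'). lra.
Qed.

(** * Paths at height >= n stay in one subtree *)

Lemma continuity_locally_constant (h : R -> R) :
  (forall x, exists del, 0 < del /\ forall y, Rabs (y - x) < del -> h y = h x) ->
  continuity h.
Proof.
  intros Hloc x eps Heps. destruct (Hloc x) as [del [Hdel Hh]].
  exists del. split; [exact Hdel |]. intros y [_ Hy]. simpl in *. unfold R_dist in *.
  rewrite (Hh y Hy), Rminus_diag, Rabs_R0. exact Heps.
Qed.

Lemma R_connected (P : R -> Prop) :
  (forall x, exists del, 0 < del /\ forall y, Rabs (y - x) < del -> (P y <-> P x)) ->
  forall a b, a <= b -> P a -> P b.
Proof.
  intros Hloc a b Hab Ha. apply NNPP. intros Hb.
  set (h := fun s => if excluded_middle_informative (P s) then - / 2 else / 2).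
  assert (Hh : continuity h).
  { apply continuity_locally_constant. intros x. destruct (Hloc x) as [del [Hdel HP]].
    exists del. split; [exact Hdel |]. intros y Hy. unfold h.
    destruct (excluded_middle_informative (P y)), (excluded_middle_informative (P x));
      firstorder. }
  assert (Hlt : a < b) by (destruct Hab as [| ->]; [assumption | contradiction]).
  destruct (IVT h a b Hh Hlt) as [z [_ Hz]]; unfold h in *;
    repeat destruct excluded_middle_informative; try contradiction; lra.
Qed.

Definition clamp01 (s : R) : R := Rmax 0 (Rmin s 1).

Lemma clamp01_in (s : R) : 0 <= clamp01 s <= 1.
Proof. unfold clamp01, Rmax, Rmin. repeat destruct Rle_dec; lra. Qed.

Lemma clamp01_id (s : R) : 0 <= s <= 1 -> clamp01 s = s.
Proof. unfold clamp01, Rmax, Rmin. repeat destruct Rle_dec; lra. Qed.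

Lemma clamp01_lipschitz (s t : R) : Rabs (clamp01 s - clamp01 t) <= Rabs (s - t).
Proof.
  unfold clamp01, Rmax, Rmin, Rabs. repeat destruct Rle_dec; repeat destruct Rcase_abs; lra.
Qed.

Lemma path_in_subtree (T : tree) (g : R -> point T) (c : V T) :
  (forall s, 0 <= s <= 1 -> INR (depth T c) <= height (g s)) ->
  (forall s, 0 <= s <= 1 -> exists del, 0 < del /\
     forall s', 0 <= s' <= 1 -> Rabs (s - s') < del -> dist (g s) (g s') < 2) ->
  subtree c (g 0) -> forall s, 0 <= s <= 1 -> subtree c (g s).
Proof.
  intros Hh Hg H0 s Hs.
  (* R_connected works on all of R, so the path is extended constantly outside [0,1]. *)
  rewrite <- (clamp01_id s Hs).
  refine (R_connected (fun s => subtree c (g (clamp01 s))) _ 0 s _ _); [| lra |].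
  - intros x. destruct (Hg (clamp01 x) (clamp01_in x)) as [del [Hdel Hd]].
    exists del. split; [exact Hdel |]. intros y Hy.
    assert (Hxy : dist (g (clamp01 x)) (g (clamp01 y)) < 2).
    { apply Hd; [apply clamp01_in |].
      eapply Rle_lt_trans; [apply clamp01_lipschitz |]. rewrite Rabs_minus_sym. exact Hy. }
    split; apply subtree_near; auto using clamp01_in.
    rewrite dist_sym. exact Hxy.
  - rewrite clamp01_id by lra. exact H0.
Qed.

Definition edge_path (T : tree) (u : V T) (hu : u <> root) (s : R) : point T :=
  match Rlt_le_dec 0 s with
  | left Hs => Point T u (Rmin s 1) (Rmin_pos s 1 Hs Rlt_0_1) (Rmin_r s 1)
                 (fun e => False_ind _ (hu e))
  | right _ => vpt (par u)
  end.

Section EdgePath.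
Variables (T : tree) (u : V T) (hu : u <> root).

Lemma edge_path0 : edge_path T u hu 0 = vpt (par u).
Proof. unfold edge_path. destruct (Rlt_le_dec 0 0); [exfalso; lra | reflexivity]. Qed.

Lemma edge_path_pt (a : point T) : pv a = u -> edge_path T u hu (pt a) = a.
Proof.
  intros Hv. pose proof (pt_pos _ a). unfold edge_path.
  destruct (Rlt_le_dec 0 (pt a)); [| exfalso; lra].
  apply point_eq; simpl; [auto | apply Rmin_left, pt_le1].
Qed.

Lemma edge_path_dist (s s' : R) : 0 <= s <= 1 -> 0 <= s' <= 1 ->
  dist (edge_path T u hu s) (edge_path T u hu s') <= Rabs (s - s').
Proof.
  intros Hs Hs'. unfold edge_path.
  destruct (Rlt_le_dec 0 s), (Rlt_le_dec 0 s').
  - rewrite dist_same_vertex by reflexivity. simpl. rewrite !Rmin_left by lra. lra.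
  - rewrite dist_sym, dist_par_vertex by auto. simpl. rewrite Rmin_left by lra.
    unfold Rabs. destruct Rcase_abs; lra.
  - rewrite dist_par_vertex by auto. simpl. rewrite Rmin_left by lra.
    unfold Rabs. destruct Rcase_abs; lra.
  - rewrite dist_refl. apply Rabs_pos.
Qed.

Lemma edge_path_height (s : R) : INR (depth T (par u)) <= height (edge_path T u hu s).
Proof.
  unfold edge_path. destruct (Rlt_le_dec 0 s).
  - apply (height_ge_depth_anc T _ 1); [reflexivity | right; lia].
  - rewrite height_vpt. lra.
Qed.

End EdgePath.

Section InducedMap.
Variables (T T' : tree) (f : point T -> point T') (Phi : nat -> nat).
Hypothesis f_seq : eta_seq f Phi.

Lemma eta_seq_height (n : nat) (a : point T) :
  (1 <= n)%nat -> INR (Phi n) <= height a -> INR n <= height (f a).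
Proof.
  intros Hn Ha. destruct (Rle_lt_dec (INR n) (height (f a))) as [| Hlt]; [assumption |].
  apply ball_root, (proj2 f_seq n a Hn), ball_root in Hlt. lra.
Qed.

Lemma eta_seq_mono (n n' : nat) : (1 <= n)%nat -> (n <= n')%nat -> (Phi n <= Phi n')%nat.
Proof.
  intros Hn Hnn'. induction Hnn' as [| m Hnm IH]; [lia |].
  pose proof (proj1 f_seq m ltac:(lia)). lia.
Qed.

Lemma eta_seq_ge1 (n : nat) : rooted f -> (1 <= n)%nat -> (1 <= Phi n)%nat.
Proof.
  intros Hroot Hn.
  assert (Hball : ball (droot T') (INR n) (f (droot T))).
  { apply ball_root. rewrite Hroot. unfold droot. rewrite height_vpt, depth_root.
    apply lt_0_INR. lia. }
  apply (proj2 f_seq n _ Hn), ball_root in Hball.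
  unfold droot in Hball. rewrite height_vpt, depth_root in Hball.
  destruct (Phi n); simpl in Hball; [lra | lia].
Qed.

Hypothesis f_cont : cont_map f.
Variables (n : nat) (c : V T) (c0 : V T').
Hypotheses (Hn : (1 <= n)%nat) (Hc : depth T c = Phi n) (Hc0 : depth T' c0 = n)
  (Hfc : subtree c0 (f (vpt c))).

Lemma edge_image_subtree (u : V T) :
  anc T c u -> u <> c -> subtree c0 (f (vpt (par u))) ->
  forall a, pv a = u -> subtree c0 (f a).
Proof.
  intros Hcu Hne Hpar a Hv.
  assert (hu : u <> root).
  { intros ->. destruct Hcu as [k Hk]. rewrite iter_par_root in Hk. auto. }
  rewrite <- (edge_path_pt T u hu a Hv).
  apply (path_in_subtree T' (fun s => f (edge_path T u hu s)) c0).
  - intros s _. rewrite Hc0. apply eta_seq_height; [exact Hn |].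
    rewrite <- Hc. eapply Rle_trans; [| apply edge_path_height].
    apply le_INR, anc_depth, anc_par; assumption.
  - intros s Hs. destruct (f_cont (edge_path T u hu s) 2) as [del [Hdel Hd]]; [lra |].
    exists del. split; [exact Hdel |]. intros s' Hs' Hss'. apply Hd.
    eapply Rle_lt_trans; [apply edge_path_dist | exact Hss']; assumption.
  - rewrite edge_path0. exact Hpar.
  - split; [apply Rlt_le, pt_pos | apply pt_le1].
Qed.

Lemma vertex_image_subtree (u : V T) : anc T c u -> subtree c0 (f (vpt u)).
Proof.
  intros [k Hk]. revert u Hk. induction k as [| k IH]; intros u Hk.
  - simpl in Hk. subst u. exact Hfc.
  - destruct (classic (u = c)) as [-> | Hne]; [exact Hfc |].
    apply (edge_image_subtree u); [exists (S k); exact Hk | exact Hne | | reflexivity].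
    apply IH. rewrite <- Nat.iter_succ_r. exact Hk.
Qed.

Lemma subtree_image (a : point T) : subtree c a -> subtree c0 (f a).
Proof.
  intros [[Hv Hle] | [Hne Hca]]; simpl in *.
  - replace a with (vpt c); [exact Hfc |].
    apply point_eq; simpl; [auto | pose proof (pt_le1 _ a); lra].
  - apply (edge_image_subtree (pv a)); auto.
    apply vertex_image_subtree, anc_par; auto.
Qed.

End InducedMap.

Lemma eta_component_unique (T T' : tree) (f : point T -> point T') (Phi : nat -> nat) :
  cont_map f -> eta_seq f Phi -> forall (n : nat) (c : V T), (1 <= n)%nat -> depth T c = Phi n ->
  exists! c' : V T', depth T' c' = n /\ forall a, subtree c a -> subtree c' (f a).
Proof.
  intros Hcont Hseq n c Hn Hc.
  assert (Hh : INR n <= height (f (vpt c)))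
    by (apply (eta_seq_height T T' f Phi); [| | rewrite height_vpt, Hc]; auto; lra).
  destruct (subtree_cover T' n _ Hh) as [c0 [Hc0 Hfc]].
  exists c0. split.
  - split; [exact Hc0 |]. exact (subtree_image T T' f Phi Hseq Hcont n c c0 Hn Hc Hc0 Hfc).
  - intros c1 [Hc1 Himg]. specialize (Himg (vpt c) (ple_refl T _)).
    apply (anc_depth_inj T' c0 c1 (pv (f (vpt c)))); [apply subtree_anc .. | congruence]; auto.
Qed.

Fixpoint incr_majorant (K : nat -> nat) (n : nat) : nat :=
  match n with O => K O | S m => (incr_majorant K m + K (S m) + 1)%nat end.

Lemma incr_majorant_ge (K : nat -> nat) (n : nat) : (K n <= incr_majorant K n)%nat.
Proof. destruct n; simpl; lia. Qed.

Lemma eta_seq_exists (T T' : tree) (f : point T -> point T') :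
  mproper f -> exists Phi, eta_seq f Phi.
Proof.
  intros Hprop.
  set (P := fun n K => forall a, ball (droot T') (INR n) (f a) -> ball (droot T) (INR K) a).
  assert (HK : forall n, exists K, P n K).
  { intros n. destruct (Hprop (INR (S n)) (lt_0_INR _ (Nat.lt_0_succ n))) as [N [_ HN]].
    destruct (INR_unbounded N) as [K HK]. exists K. intros a Ha.
    unfold ball in *. enough (dist (droot T) a < N) by lra.
    apply HN. rewrite S_INR. lra. }
  set (K := fun n => epsilon (inhabits 0%nat) (P n)).
  assert (HPK : forall n, P n (K n)) by (intros n; apply epsilon_spec, HK).
  exists (incr_majorant K). split.
  - intros m _. simpl. lia.
  - intros m a _ Ha. apply HPK in Ha. unfold ball in *.
    eapply Rlt_le_trans; [exact Ha |]. apply le_INR, incr_majorant_ge.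
Qed.

(** * Functoriality *)

Lemma pnm_eta_obj (T : tree) (n m : nat) (x : V T) :
  pnm (eta_obj T) n m x = Nat.iter (m - n) par x.
Proof.
  unfold pnm. simpl. generalize (m - n)%nat as k. intros k. revert x.
  induction k as [| k IH]; intros x; simpl; [reflexivity |].
  rewrite IH, <- Nat.iter_succ_r. reflexivity.
Qed.

Lemma eta_obj_is_tower (T : tree) : is_tower (eta_obj T).
Proof. intros n x _ Hx. simpl in *. rewrite depth_par. lia. Qed.

Lemma eta_data_subtree (T T' : tree) (f : point T -> point T') (F : tmor (eta_obj T) (eta_obj T'))
    (n m : nat) (x : V T) :
  eta_data f F -> (1 <= n)%nat -> (tPhi F n <= m)%nat -> depth T x = m ->
  let y := tf F n (pnm (eta_obj T) (tPhi F n) m x) in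
  depth T' y = n /\ subtree y (f (vpt x)).
Proof.
  intros [_ Hdata] Hn Hm Hx. rewrite pnm_eta_obj.
  assert (Hd : depth T (Nat.iter (m - tPhi F n) par x) = tPhi F n) by (rewrite depth_iter; lia).
  destruct (Hdata n _ Hn Hd) as [Hdepth Himg]. split; [exact Hdepth |].
  apply Himg, subtree_vpt, anc_iter.
Qed.

Lemma eta_data_is_tmor (T T' : tree) (f : point T -> point T') (F : tmor (eta_obj T) (eta_obj T')) :
  rcp f -> eta_data f F -> is_tmor F.
Proof.
  intros [Hroot _] HF. pose proof HF as [Hseq Hdata]. split; [| split].
  - intros n Hn. exact (eta_seq_ge1 T T' f _ Hseq n Hroot Hn).
  - intros n x Hn Hx. exact (proj1 (Hdata n x Hn Hx)).
  - intros n n' Hn Hnn'. pose proof (eta_seq_mono T T' f _ Hseq n n' Hn ltac:(lia)).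
    exists (tPhi F n'). repeat split; [lia | lia |]. intros x Hx.
    destruct (eta_data_subtree T T' f F n (tPhi F n') x HF Hn ltac:(lia) Hx) as [D1 A1].
    destruct (eta_data_subtree T T' f F n' (tPhi F n') x HF ltac:(lia) (le_n _) Hx) as [D2 A2].
    rewrite (pnm_eta_obj T' n n').
    apply (anc_depth_inj T' _ _ (pv (f (vpt x)))); [apply subtree_anc, A1 | |].
    + eapply anc_trans; [apply anc_iter | apply subtree_anc, A2].
    + rewrite depth_iter, D1, D2. lia.
Qed.

Lemma rp_homotopy_track (T T' : tree) (f g : point T -> point T') (H : point T -> R -> point T')
    (x : V T) (c0 : V T') :
  rp_homotopy f g H ->
  (forall s, 0 <= s <= 1 -> INR (depth T' c0) <= height (H (vpt x) s)) ->
  subtree c0 (f (vpt x)) -> subtree c0 (g (vpt x)).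
Proof.
  intros [Hcont [H0 [H1 _]]] Hh Hf. rewrite <- H1.
  apply (path_in_subtree T' (H (vpt x)) c0 Hh); [| rewrite H0; exact Hf | lra].
  intros s Hs. destruct (Hcont (vpt x) s 2 Hs ltac:(lra)) as [del [Hdel Hd]].
  exists del. split; [exact Hdel |]. intros s' Hs' Hss'.
  apply Hd; [exact Hs' | rewrite dist_refl; exact Hdel | exact Hss'].
Qed.

Lemma eta_data_homotopy_invariant (T T' : tree) (f g : point T -> point T')
    (F G : tmor (eta_obj T) (eta_obj T')) :
  rp_homotopic f g -> eta_data f F -> eta_data g G -> tmor_eq F G.
Proof.
  intros [H HH] HF HG n Hn. pose proof HH as [_ [_ [_ [_ Hprop]]]].
  destruct (Hprop (INR n) (lt_0_INR _ Hn)) as [N [_ HN]].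
  destruct (INR_unbounded N) as [K HK].
  set (m := Nat.max K (Nat.max (tPhi F n) (tPhi G n))).
  exists m. repeat split; [lia | lia |]. intros x Hx. simpl in Hx.
  destruct (eta_data_subtree T T' f F n m x HF Hn ltac:(lia) Hx) as [D1 A1].
  destruct (eta_data_subtree T T' g G n m x HG Hn ltac:(lia) Hx) as [D2 A2].
  apply (anc_depth_inj T' _ _ (pv (g (vpt x)))); [| apply subtree_anc, A2 | congruence].
  apply subtree_anc, (rp_homotopy_track T T' f g H); [exact HH | | exact A1].
  intros s Hs. rewrite D1. destruct (Rle_lt_dec (INR n) (height (H (vpt x) s))) as [| Hlt];
    [assumption | exfalso].
  apply ball_root, (HN _ s Hs), ball_root in Hlt.
  rewrite height_vpt, Hx in Hlt. assert (INR K <= INR m) by (apply le_INR; lia). lra.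
Qed.

Lemma eta_data_id (T : tree) (F : tmor (eta_obj T) (eta_obj T)) :
  eta_data (fun a : point T => a) F -> tmor_eq F (tmor_id (eta_obj T)).
Proof.
  intros HF n Hn. exists (Nat.max (tPhi F n) n). simpl. repeat split; [lia | lia |].
  intros x Hx.
  destruct (eta_data_subtree T T _ F n _ x HF Hn (Nat.le_max_l _ _) Hx) as [D1 A1].
  rewrite (pnm_eta_obj T n).
  apply (anc_depth_inj T _ _ x); [exact (subtree_anc T _ _ A1) | apply anc_iter | rewrite depth_iter; lia].
Qed.

Lemma eta_data_comp (T T' T'' : tree) (f : point T -> point T') (g : point T' -> point T'')
    (F : tmor (eta_obj T) (eta_obj T')) (G : tmor (eta_obj T') (eta_obj T''))
    (H : tmor (eta_obj T) (eta_obj T'')) :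
  rcp g -> eta_data f F -> eta_data g G -> eta_data (fun a => g (f a)) H ->
  tmor_eq (tmor_comp F G) H.
Proof.
  intros [Hroot _] HF [HGseq HGdata] HH n Hn. simpl.
  pose proof (eta_seq_ge1 T' T'' g _ HGseq n Hroot Hn) as HGn.
  set (m := Nat.max (tPhi F (tPhi G n)) (tPhi H n)).
  exists m. repeat split; [lia | lia |]. intros x Hx. simpl in Hx.
  destruct (eta_data_subtree T T' f F (tPhi G n) m x HF HGn ltac:(lia) Hx) as [D1 A1].
  destruct (eta_data_subtree T T'' _ H n m x HH Hn ltac:(lia) Hx) as [D3 A3].
  destruct (HGdata n _ Hn D1) as [D2 S2].
  apply (anc_depth_inj T'' _ _ (pv (g (f (vpt x))))); [| apply subtree_anc, A3 | congruence].
  apply subtree_anc, S2, A1.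
Qed.

Theorem proposition5p4 :
  (forall T : tree, is_tower (eta_obj T)) /\
  (forall (T T' : tree) (f : point T -> point T'),
     rcp f -> exists Phi, eta_seq f Phi) /\
  (forall (T T' : tree) (f : point T -> point T') (Phi : nat -> nat),
     rcp f -> eta_seq f Phi ->
     forall (n : nat) (c : V T), (1 <= n)%nat -> depth T c = Phi n ->
       exists! c' : V T', depth T' c' = n /\
                          forall a, subtree c a -> subtree c' (f a)) /\
  (forall (T T' : tree) (f : point T -> point T') (F : tmor (eta_obj T) (eta_obj T')),
     rcp f -> eta_data f F -> is_tmor F) /\
  (forall (T T' : tree) (f g : point T -> point T')
          (F G : tmor (eta_obj T) (eta_obj T')),
     rcp f -> rcp g -> rp_homotopic f g ->
     eta_data f F -> eta_data g G -> tmor_eq F G) /\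
  (forall (T : tree) (F : tmor (eta_obj T) (eta_obj T)),
     eta_data (fun a : point T => a) F -> tmor_eq F (tmor_id (eta_obj T))) /\
  (forall (T T' T'' : tree) (f : point T -> point T') (g : point T' -> point T'')
          (F : tmor (eta_obj T) (eta_obj T')) (G : tmor (eta_obj T') (eta_obj T''))
          (H : tmor (eta_obj T) (eta_obj T'')),
     rcp f -> rcp g -> eta_data f F -> eta_data g G ->
     eta_data (fun a => g (f a)) H -> tmor_eq (tmor_comp F G) H).
Proof.
  split; [exact eta_obj_is_tower |].
  split; [intros T T' f (_ & _ & Hprop); exact (eta_seq_exists T T' f Hprop) |].
  split; [intros T T' f Phi (_ & Hcont & _); exact (eta_component_unique T T' f Phi Hcont) |].
  split; [exact eta_data_is_tmor |].
  split; [intros T T' f g F G _ _; exact (eta_data_homotopy_invariant T T' f g F G) |].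
  split; [exact eta_data_id |].
  intros T T' T'' f g F G H _ Hg; exact (eta_data_comp T T' T'' f g F G H Hg).
Qed.
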